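(* For every integer $k\ge1$, $N(2k+4,k)=2$ if $3\mid k$ and $N(2k+4,k)=0$ if $3\nmid k$.
   Context: For $n>k\ge1$, $N(n,k)$ is the nullity of the $n\times n$ skew-symmetric Toeplitz matrix $A(n,k)$ whose first $k$ superdiagonals have all entries $1$ and whose remaining superdiagonals have all entries $0$. *)

From mathcomp Require Import all_boot all_order all_algebra.
Set Implicit Arguments. Unset Strict Implicit. Unset Printing Implicit Defensive.
Import GRing.Theory Num.Theory.
Local Open Scope ring_scope.

Definition Amat (R : nzRingType) (n k : nat) : 'M[R]_n :=
  \matrix_(i < n, j < n)
    (if (i < j)%N && (j <= i + k)%N then 1
     else if (j < i)%N && (i <= j + k)%N then -1 else 0).

Definition Nnull (R : fieldType) (n k : nat) : nat := (n - \rank (Amat R n k))%N.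

(* Write P for the prefix sums of a row vector x of length n = 2k + 4.  Column
   j of x *m A(n, k) is (P j - P (j - k)) - (P (j + k + 1) - P j.+1), so x lies
   in the kernel iff P 0 = 0, P is constant from n on, and
   P j + P j.+1 = P (j - k) + P (j + k + 1) for j < n.  These equations force
   P 1 = P (k + 1) = 0, P (k + 2) = P 2 and P m + P m.+1 + P m.+2 = P n for
   1 <= m <= k, so P is 3-periodic on [1, k + 2].  Matching P (k + 1), P (k + 2)
   with P 1, P 2 kills P unless 3 | k; when 3 | k, P is determined by P 2 and
   P 3, and both can be prescribed, so x |-> (P 2, P 3) maps the kernel
   isomorphically onto R^2. *)

From mathcomp Require Import all_boot all_order all_algebra.
From mathcomp Require Import zify lra.
Set Implicit Arguments. Unset Strict Implicit. Unset Printing Implicit Defensive.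
Import GRing.Theory Num.Theory.
Local Open Scope ring_scope.

Section KernelRank.

Variables (F : fieldType) (m n p : nat) (A : 'M[F]_(m, n)).

Lemma mxrank_ker_leq (C : 'M[F]_(m, p)) :
  (forall x : 'rV_m, x *m A = 0 -> x *m C = 0 -> x = 0) -> (\rank (kermx A) <= p)%N.
Proof.
move=> inj; rewrite -(mxrank_mul_ker (kermx A) C).
have -> : \rank (kermx A :&: kermx C)%MS = 0%N.
  apply/eqP; rewrite mxrank_eq0; apply/eqP/row_matrixP => i; rewrite row0.
  by apply: inj; apply/sub_kermxP; rewrite (submx_trans (row_sub i _)) ?capmxSl ?capmxSr.
by rewrite addn0 rank_leq_col.
Qed.

Lemma mxrank_ker_geq (B : 'M[F]_(p, m)) (C : 'M[F]_(m, p)) :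
  B *m A = 0 -> B *m C = 1%:M -> (p <= \rank (kermx A))%N.
Proof.
move=> BA0 BC1; rewrite -[p in (p <= _)%N](mxrank1 F p) -BC1.
by rewrite (leq_trans (mxrankM_maxl _ _)) // mxrankS //; apply/sub_kermxP.
Qed.

End KernelRank.

Section PrefixSums.

Variables (V : zmodType) (n : nat).
Implicit Type x : 'rV[V]_n.

Definition prefix_sum x (m : nat) : V := \sum_(i < n | (i < m)%N) x 0 i.

Lemma prefix_sum0 x : prefix_sum x 0 = 0.
Proof. exact: big_pred0. Qed.

Lemma prefix_sum_sat x m : (n <= m)%N -> prefix_sum x m = prefix_sum x n.
Proof.
by move=> le_nm; apply: eq_bigl => i; rewrite ltn_ord (leq_trans (ltn_ord i)).
Qed.

Lemma sum_interval x m p : (m <= p)%N ->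
  \sum_(i < n | (m <= i < p)%N) x 0 i = prefix_sum x p - prefix_sum x m.
Proof.
move=> le_mp; rewrite [prefix_sum x p](bigID (fun i : 'I_n => (i < m)%N)) /=.
have -> : \sum_(i < n | (i < p)%N && (i < m)%N) x 0 i = prefix_sum x m.
  by apply: eq_bigl => i; apply/idP/idP; lia.
by rewrite addrC addrK; apply: eq_bigl => i; apply/idP/idP; lia.
Qed.

Lemma prefix_sumS x (i : 'I_n) : prefix_sum x i.+1 = prefix_sum x i + x 0 i.
Proof.
rewrite -[LHS](subrK (prefix_sum x i)) -sum_interval // addrC; congr (_ + _).
by rewrite (big_pred1 i) // => j; rewrite ltnS -eqn_leq eq_sym.
Qed.

Lemma prefix_sum_eq0 x : (forall m, prefix_sum x m = 0) -> x = 0.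
Proof.
by move=> x0; apply/rowP => i; have := prefix_sumS x i; rewrite !x0 add0r mxE.
Qed.

Definition diff_row (P : nat -> V) : 'rV[V]_n := \row_(i < n) (P i.+1 - P i).

Lemma prefix_sum_diff_row (P : nat -> V) : P 0%N = 0 ->
  (forall m, (n <= m)%N -> P m = P n) -> forall m, prefix_sum (diff_row P) m = P m.
Proof.
move=> P0 P_sat; elim=> [|m IH]; first by rewrite prefix_sum0.
have [lt_mn|le_nm] := ltnP m n.
  by rewrite (prefix_sumS _ (Ordinal lt_mn)) /= IH mxE addrC subrK.
by rewrite prefix_sum_sat ?(leqW le_nm) // -(prefix_sum_sat _ le_nm) IH !P_sat // leqW.
Qed.

End PrefixSums.

Lemma mulmx_Amat (R : nzRingType) n k (x : 'rV[R]_n) (j : 'I_n) :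
  (x *m Amat R n k) 0 j =
  (prefix_sum x j - prefix_sum x (j - k)) - (prefix_sum x (j + k + 1) - prefix_sum x j.+1).
Proof.
rewrite -!sum_interval ?leq_subr //; last lia.
rewrite mxE [in RHS]big_mkcond [X in _ = _ - X]big_mkcond -sumrB.
apply: eq_bigr => i _; rewrite mxE.
rewrite (_ : (j - k <= i < j)%N = ((i < j) && (j <= i + k))%N); last by apply/idP/idP; lia.
rewrite (_ : (j.+1 <= i < j + k + 1)%N = ((j < i) && (i <= j + k))%N); last by apply/idP/idP; lia.
by case: ifP => c1; case: ifP => c2; rewrite ?mulr1 ?mulrN1 ?mulr0 ?subr0 ?sub0r //; lia.
Qed.

Lemma prefix_sum_rec_of_ker (R : nzRingType) n k (x : 'rV[R]_n) :
  x *m Amat R n k = 0 -> forall j, (j < n)%N ->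
  prefix_sum x j + prefix_sum x j.+1 =
  prefix_sum x (j - k) + prefix_sum x (j + k + 1).
Proof.
move=> xA0 j lt_jn; have := mulmx_Amat k x (Ordinal lt_jn).
rewrite xA0 mxE /= => /esym/eqP; rewrite subr_eq0 => /eqP E.
by rewrite -[prefix_sum x j](subrK (prefix_sum x (j - k))) E addrAC subrK addrC.
Qed.

Section KernelRecurrence.

(* [P] stands for the prefix sums of a kernel vector; [j - k] truncates to 0,
   where [P] vanishes. *)
Variables (R : realDomainType) (k : nat) (P : nat -> R).
Hypotheses (k_gt0 : (0 < k)%N) (P0 : P 0%N = 0)
  (P_sat : forall m, (2 * k + 4 <= m)%N -> P m = P (2 * k + 4)%N)
  (P_rec : forall j, (j < 2 * k + 4)%N ->
     P j + P j.+1 = P (j - k)%N + P (j + k + 1)%N).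

Local Notation T := (P (2 * k + 4)%N).

Lemma rec_at j j' c d : (j < 2 * k + 4)%N ->
  j' = j.+1 -> c = (j - k)%N -> d = (j + k + 1)%N -> P j + P j' = P c + P d.
Proof. by move=> lt_j -> -> ->; exact: P_rec. Qed.

Lemma rec_at_top j j' c : (k + 3 <= j < 2 * k + 4)%N ->
  j' = j.+1 -> c = (j - k)%N -> P j + P j' = P c + T.
Proof.
move=> j_bd -> ->; rewrite -(P_sat (m := (j + k + 1)%N)); last lia.
by apply: P_rec; lia.
Qed.

Lemma rec1_eq0 : P 1%N = 0.
Proof.
have E1 : P 1%N + P 2%N = P 0%N + P (k + 2)%N by apply: rec_at; lia.
have E2 : P (k + 2)%N + P (k + 3)%N = P 2%N + P (2 * k + 3)%N by apply: rec_at; lia.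
have E3 : P (2 * k + 3)%N + T = P (k + 3)%N + T by apply: rec_at_top; lia.
rewrite P0 in E1; lra.
Qed.

Lemma rec_shift j j' d : (j <= k + 1)%N -> j' = j.+1 -> d = (j + k + 1)%N ->
  P d = P j + P j'.
Proof.
move=> le_j -> ->; have [le_jk|gt_jk] := leqP j k.
  by rewrite (rec_at (c := 0%N) (d := (j + k + 1)%N)) ?P0 ?add0r //; lia.
by rewrite (rec_at (c := 1%N) (d := (j + k + 1)%N)) ?rec1_eq0 ?add0r //; lia.
Qed.

Lemma rec_saturated m : (2 * k + 3 <= m)%N -> P m = T.
Proof.
case: (ltngtP m (2 * k + 3)) => [lt_m le_m|lt_m _|-> _]; [lia | apply: P_sat; lia |].
have E1 : P (2 * k + 2)%N = P (k + 1)%N + P (k + 2)%N by apply: rec_shift; lia.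
have E2 : P (2 * k + 2)%N + P (2 * k + 3)%N = P (k + 2)%N + T by apply: rec_at_top; lia.
have E3 : P (k + 1)%N = P 0%N + P 1%N by apply: rec_shift; lia.
rewrite P0 rec1_eq0 in E3; lra.
Qed.

Lemma rec_sum3 m : (1 <= m <= k)%N -> P m + P m.+1 + P m.+2 = T.
Proof.
move=> m_bd.
have E1 : P (m + k + 1)%N = P m + P m.+1 by apply: rec_shift; lia.
have E2 : P (m + k + 2)%N = P m.+1 + P m.+2 by apply: rec_shift; lia.
have E3 : P (m + k + 1)%N + P (m + k + 2)%N = P m.+1 + P (2 * k + m + 2)%N.
  by apply: rec_at; lia.
rewrite (rec_saturated (m := (2 * k + m + 2)%N)) in E3; [lra | lia].
Qed.

Lemma rec_add3 j j' : (0 < j < k)%N -> j' = (j + 3)%N -> P j' = P j.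
Proof.
move=> j_bd ->; rewrite addn3.
have E1 : P j + P j.+1 + P j.+2 = T by apply: rec_sum3; lia.
have E2 : P j.+1 + P j.+2 + P j.+3 = T by apply: rec_sum3; lia.
lra.
Qed.

Lemma rec_mod3 m r : (0 < m <= k + 2)%N -> r = (m.-1 %% 3)%N -> P m = P r.+1.
Proof.
move=> + ->; elim/ltn_ind: m => m IH m_bd; have [le_m3|lt3_m] := leqP m 3.
  by rewrite modn_small prednK //; lia.
rewrite (rec_add3 (j := (m - 3)%N)) ?(IH (m - 3)%N); try lia.
by congr (P _.+1); lia.
Qed.

Lemma rec_eq0 : P 2%N = 0 -> P 3%N = 0 -> forall m, P m = 0.
Proof.
move=> P2 P3.
have T0 : T = 0 by rewrite -(rec_sum3 (m := 1%N)) ?rec1_eq0 ?P2 ?P3 ?addr0 //; lia.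
have P_lo m : (0 < m <= k + 2)%N -> P m = 0.
  move=> m_bd; rewrite (rec_mod3 (r := (m.-1 %% 3)%N)) //.
  by case: (m.-1 %% 3)%N (ltn_pmod m.-1 (isT : 0 < 3)%N) => [|[|[|r]]] //; rewrite rec1_eq0.
move=> m; have [le_m|lt_m] := leqP m (k + 2).
  by case: (posnP m) => [->|m_gt0]; [exact: P0 | apply: P_lo; lia].
have [le_m'|lt_m'] := leqP m (2 * k + 2).
  by rewrite (rec_shift (j := (m - k - 1)%N) (j' := (m - k)%N)) ?P_lo ?addr0 //; lia.
by rewrite rec_saturated //; lia.
Qed.

Lemma rec_eq0_ndvd3 : ~~ (3 %| k)%N -> forall m, P m = 0.
Proof.
move=> k_ndvd; suff [P2 P3] : P 2%N = 0 /\ P 3%N = 0 by apply: rec_eq0.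
have Pk1 : P (k + 1)%N = P 0%N + P 1%N by apply: rec_shift; lia.
have Pk2 : P (k + 2)%N = P 1%N + P 2%N by apply: rec_shift; lia.
rewrite P0 rec1_eq0 add0r in Pk1; rewrite rec1_eq0 add0r in Pk2.
have [k1|k2] : (k %% 3 = 1 \/ k %% 3 = 2)%N by lia.
- rewrite (rec_mod3 (m := (k + 1)%N) (r := 1%N)) in Pk1; try lia.
  by rewrite (rec_mod3 (m := (k + 2)%N) (r := 2%N)) in Pk2; [rewrite Pk2 Pk1 | lia..].
- rewrite (rec_mod3 (m := (k + 1)%N) (r := 2%N)) in Pk1; try lia.
  by rewrite (rec_mod3 (m := (k + 2)%N) (r := 0%N)) in Pk2; [rewrite -Pk2 rec1_eq0 | lia..].
Qed.

End KernelRecurrence.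

Section KernelSequence.

Variables (R : realDomainType) (k : nat) (a b : R).

Definition period3 (m : nat) : R :=
  if (m %% 3 == 1)%N then 0 else if (m %% 3 == 2)%N then a else b.

Lemma period3_eqmod m m' : m = m' %[mod 3] -> period3 m = period3 m'.
Proof. by rewrite /period3 => ->. Qed.

Lemma period3_sum m : period3 m + period3 m.+1 + period3 m.+2 = a + b.
Proof.
rewrite /period3 -[m.+2]addn2 -[m.+1]addn1 -!(modnDml m).
by case: (m %% 3)%N (ltn_pmod m (isT : 0 < 3)%N) => [|[|[|r]]] //= _; lra.
Qed.

(* The solution with P 2 = a and P 3 = b: 3-periodic 0, a, b on [1, k + 1],
   then P (j + k + 1) = P j + P j.+1 rewritten with period3_sum. *)
Definition kernel_seq (m : nat) : R :=
  if m == 0%N then 0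
  else if (m <= k + 1)%N then period3 m
  else if (m <= 2 * k + 2)%N then a + b - period3 m.+1
  else a + b.

Lemma kernel_seq0 : kernel_seq 0 = 0.
Proof. by []. Qed.

Lemma kernel_seq_hi m : (2 * k + 3 <= m)%N -> kernel_seq m = a + b.
Proof.
move=> m_bd; rewrite /kernel_seq gtn_eqF; last lia.
by rewrite !ifF //; lia.
Qed.

Hypothesis k_dvd3 : (3 %| k)%N.

Lemma kernel_seq_lo m : (0 < m <= k + 2)%N -> kernel_seq m = period3 m.
Proof.
move=> m_bd; rewrite /kernel_seq gtn_eqF; last lia.
have [//|gt_mk1] := leqP m (k + 1).
rewrite ifT; last lia.
have -> : m = k.+2 by lia.
have := period3_sum k.+1; rewrite (period3_eqmod (m := k.+1) (m' := 1)); last lia.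
have : period3 1 = 0 by []; lra.
Qed.

Lemma kernel_seq_mid m : (k + 2 <= m <= 2 * k + 3)%N ->
  kernel_seq m = a + b - period3 m.+1.
Proof.
move=> m_bd; rewrite /kernel_seq gtn_eqF; last lia.
rewrite ifF; last lia.
have [//|gt_m] := leqP m (2 * k + 2).
rewrite (period3_eqmod (m := m.+1) (m' := 1)); last lia.
by rewrite /period3 /= subr0.
Qed.

Lemma kernel_seq_rec j : (j < 2 * k + 4)%N ->
  kernel_seq j + kernel_seq j.+1 = kernel_seq (j - k) + kernel_seq (j + k + 1).
Proof.
move=> lt_j; have p1 : period3 1 = 0 by [].
have [j0|j_gt0] := posnP j.
  rewrite j0 sub0n kernel_seq0 !kernel_seq_lo; try lia.
  by rewrite (period3_eqmod (m := (0 + k + 1)%N) (m' := 1)) ?p1 ?addr0 //; lia.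
have [le_jk1|gt_jk1] := leqP j (k + 1).
  have -> : kernel_seq (j - k) = 0.
    case: (posnP (j - k)) => [->|?]; first exact: kernel_seq0.
    by rewrite kernel_seq_lo ?(period3_eqmod (m' := 1)) //; lia.
  rewrite (kernel_seq_lo (m := j)) ?(kernel_seq_lo (m := j.+1)); try lia.
  rewrite kernel_seq_mid ?(period3_eqmod (m := (j + k + 1).+1) (m' := j.+2)); try lia.
  have := period3_sum j; lra.
have [le_j|gt_j] := leqP j (2 * k + 2).
  rewrite (kernel_seq_mid (m := j)) ?(kernel_seq_mid (m := j.+1)); try lia.
  rewrite kernel_seq_lo ?(period3_eqmod (m := (j - k)%N) (m' := j)); try lia.
  rewrite kernel_seq_hi; last lia.
  have := period3_sum j; lra.
have -> : j = (2 * k + 3)%N by lia.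
rewrite (kernel_seq_hi (m := (2 * k + 3)%N)) ?(kernel_seq_hi (m := (2 * k + 3).+1)); try lia.
rewrite kernel_seq_mid ?kernel_seq_hi ?(period3_eqmod (m' := 1)); try lia.
lra.
Qed.

End KernelSequence.

Lemma Amat_ker_eq0 (R : realFieldType) k (x : 'rV[R]_(2 * k + 4)) : (0 < k)%N ->
  x *m Amat R (2 * k + 4) k = 0 ->
  ~~ (3 %| k)%N \/ (prefix_sum x 2 = 0 /\ prefix_sum x 3 = 0) -> x = 0.
Proof.
move=> k_gt0 xA0 cases; apply: prefix_sum_eq0.
have rec := prefix_sum_rec_of_ker xA0.
have sat := @prefix_sum_sat _ _ x.
case: cases => [k_ndvd3 | [P2 P3]].
  exact: (rec_eq0_ndvd3 k_gt0 (prefix_sum0 x) sat rec).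
exact: (rec_eq0 k_gt0 (prefix_sum0 x) sat rec).
Qed.

Definition prefix23_mx (R : nzRingType) n : 'M[R]_(n, 2) :=
  \matrix_(i, j) (i < j + 2)%N%:R.

Lemma mulmx_prefix23 (R : nzRingType) n (x : 'rV[R]_n) j :
  (x *m prefix23_mx R n) 0 j = prefix_sum x (j + 2).
Proof.
rewrite mxE [RHS]big_mkcond; apply: eq_bigr => i _; rewrite mxE.
by case: ifP; rewrite ?mulr1 ?mulr0.
Qed.

Definition kernel_vec (R : realDomainType) k (u : 'rV[R]_2) : 'rV[R]_(2 * k + 4) :=
  diff_row (2 * k + 4) (kernel_seq k (u 0 0) (u 0 1)).

Lemma prefix_sum_kernel_vec (R : realDomainType) k (u : 'rV[R]_2) m :
  prefix_sum (kernel_vec k u) m = kernel_seq k (u 0 0) (u 0 1) m.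
Proof.
apply: prefix_sum_diff_row => [|m' le_m']; first exact: kernel_seq0.
by rewrite !kernel_seq_hi //; lia.
Qed.

Lemma kernel_vec_ker (R : realDomainType) k (u : 'rV[R]_2) : (3 %| k)%N ->
  kernel_vec k u *m Amat R (2 * k + 4) k = 0.
Proof.
move=> k_dvd3; apply/rowP => j; rewrite mulmx_Amat !prefix_sum_kernel_vec mxE.
have := kernel_seq_rec (u 0 0) (u 0 1) k_dvd3 (ltn_ord j); lra.
Qed.

Lemma kernel_vec_prefix23 (R : realDomainType) k (u : 'rV[R]_2) :
  (0 < k)%N -> (3 %| k)%N -> kernel_vec k u *m prefix23_mx R (2 * k + 4) = u.
Proof.
move=> k_gt0 k_dvd3; apply/rowP => j.
rewrite mulmx_prefix23 prefix_sum_kernel_vec kernel_seq_lo //; last by have := ltn_ord j; lia.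
by case: j => [[|[|j]] lt_j] //=; rewrite /period3 /=; congr (u _ _); apply: val_inj.
Qed.

Theorem theorem8p4 (R : realFieldType) (k : nat) : (1 <= k)%N ->
  Nnull R (2 * k + 4) k = (if (3 %| k)%N then 2%N else 0%N).
Proof.
move=> k_gt0; rewrite /Nnull -mxrank_ker.
case: ifP => [k_dvd3|k_ndvd3]; apply/eqP; last first.
  rewrite -leqn0 (mxrank_ker_leq (C := 0 : 'M[R]_(_, 0))) // => x xA0 _.
  by apply: (Amat_ker_eq0 k_gt0 xA0); left; rewrite k_ndvd3.
rewrite eqn_leq (mxrank_ker_leq (C := prefix23_mx R _)) => [|x xA0 xC0]; last first.
  apply: (Amat_ker_eq0 k_gt0 xA0); right.
  by split; [move/rowP/(_ 0): xC0 | move/rowP/(_ 1): xC0]; rewrite mulmx_prefix23 mxE.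
apply: (mxrank_ker_geq (B := \matrix_(r < 2) kernel_vec k (row r 1%:M)) (C := prefix23_mx R _)).
  by apply/row_matrixP => r; rewrite row_mul rowK kernel_vec_ker ?row0.
by apply/row_matrixP => r; rewrite row_mul rowK kernel_vec_prefix23.
Qed.
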